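(* Let $K$ be a nonempty, compact and convex subset of a real Hausdorff locally convex topological vector space $X$, let $Y$ be a closed, convex, bounded and symmetric ($Y=-Y$) subset of a locally convex topological vector space, let $U\subseteq K$ be self-segment-dense in $K$ and suppose that $\operatorname{co}(U)$ is segment-dense in $K$. Let $f:K\times Y\to\mathbb R$ be bounded and satisfy: (i) for every $y\in Y$ the map $x\mapsto f(x,y)$ is convex and continuous on $K$; (ii) for every $x\in K$ the map $y\mapsto f(x,y)$ is affine and continuous on $Y$. Then $\{f(u,\cdot)\}_{u\in U}$ is dense in $\{f(x,\cdot)\}_{x\in K}$ in $B(Y)$; that is, for every $k\in K$ and $\varepsilon>0$ there exists $u\in U$ with $\sup_{y\in Y}|f(u,y)-f(k,y)|<\varepsilon$.
   Context: $B(Y)$ is the space of bounded real functions on $Y$ with the uniform norm. $\operatorname{co}$ is the convex hull. Affine: $f(x,(1-t)y_1+ty_2)=(1-t)f(x,y_1)+tf(x,y_2)$ for $y_1,y_2\in Y$, $t\in[0,1]$. $[x,y]=\{x+t(y-x):t\in[0,1]\}$. Self-segment-dense: for convex $V$ and $U\subseteq V$, $U$ is self-segment-dense in $V$ if $V\subseteq\operatorname{cl}U$ and for all $x,y\in U$, $[x,y]\cap U$ is dense in $[x,y]$. Segment-dense: for convex $V$ and $U\subseteq V$, $U$ is segment-dense in $V$ if for each $x\in V$ there is $y\in U$ such that $x$ is a cluster point of $[x,y]\cap U$. *)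

From Stdlib Require Import Reals List.
Open Scope R_scope.
Set Implicit Arguments.


Record TVS : Type := {
  tv :> Type;
  vadd : tv -> tv -> tv;
  vzero : tv;
  vopp : tv -> tv;
  vscal : R -> tv -> tv;
  vaddA : forall x y z, vadd x (vadd y z) = vadd (vadd x y) z;
  vaddC : forall x y, vadd x y = vadd y x;
  vadd0 : forall x, vadd x vzero = x;
  vaddN : forall x, vadd x (vopp x) = vzero;
  vscalA : forall a b x, vscal a (vscal b x) = vscal (a * b) x;
  vscal1 : forall x, vscal 1 x = x;
  vscalDr : forall a x y, vscal a (vadd x y) = vadd (vscal a x) (vscal a y);
  vscalDl : forall a b x, vscal (a + b) x = vadd (vscal a x) (vscal b x);
  vopen : (tv -> Prop) -> Prop;
  vopen_full : vopen (fun _ => True);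
  vopen_inter : forall A B, vopen A -> vopen B -> vopen (fun x => A x /\ B x);
  vopen_union : forall F : (tv -> Prop) -> Prop,
      (forall A, F A -> vopen A) -> vopen (fun x => exists A, F A /\ A x);
  vadd_cont : forall x y W, vopen W -> W (vadd x y) ->
      exists U V, vopen U /\ vopen V /\ U x /\ V y /\
        forall a b, U a -> V b -> W (vadd a b);
  vscal_cont : forall t x W, vopen W -> W (vscal t x) ->
      exists d U, 0 < d /\ vopen U /\ U x /\
        forall s a, Rabs (s - t) < d -> U a -> W (vscal s a)
}.

Arguments vadd {_}. Arguments vscal {_}. Arguments vopp {_}. Arguments vzero {_}. Arguments vopen {_}.
Section Defs.
Context {X : TVS}.

Definition subset (A B : X -> Prop) := forall x, A x -> B x.

Definition comb (t : R) (x y : X) : X :=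
  vadd (vscal (1 - t) x) (vscal t y).

Definition tv_convex (C : X -> Prop) :=
  forall x y t, C x -> C y -> 0 <= t <= 1 -> C (comb t x y).

Definition co (U : X -> Prop) : X -> Prop :=
  fun z => forall C, tv_convex C -> subset U C -> C z.

Definition segment (x y : X) : X -> Prop :=
  fun z => exists t, 0 <= t <= 1 /\ z = vadd x (vscal t (vadd y (vopp x))).

Definition tv_closure (A : X -> Prop) : X -> Prop :=
  fun x => forall W, vopen W -> W x -> exists a, W a /\ A a.

Definition tv_closed (A : X -> Prop) := vopen (fun x => ~ A x).

Definition cluster_point (A : X -> Prop) (x : X) :=
  forall W, vopen W -> W x -> exists a, W a /\ A a /\ a <> x.

Definition dense_in (A S : X -> Prop) := subset S (tv_closure A).

Definition self_segment_dense (U V : X -> Prop) :=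
  subset U V /\ subset V (tv_closure U) /\
  forall x y, U x -> U y ->
    dense_in (fun z => segment x y z /\ U z) (segment x y).

Definition segment_dense (U V : X -> Prop) :=
  subset U V /\
  forall x, V x -> exists y, U y /\
    cluster_point (fun z => segment x y z /\ U z) x.

Definition tv_compact (K : X -> Prop) :=
  forall (I : Type) (O : I -> X -> Prop),
    (forall i, vopen (O i)) -> (forall x, K x -> exists i, O i x) ->
    exists l : list I, forall x, K x -> exists i, In i l /\ O i x.

Definition hausdorff :=
  forall x y : X, x <> y -> exists U V, vopen U /\ vopen V /\ U x /\ V y /\
    forall z, ~ (U z /\ V z).

Definition locally_convex :=
  forall x W, vopen W -> W x -> exists V, vopen V /\ tv_convex V /\ V x /\ subset V W.

Definition tv_bounded (Y : X -> Prop) :=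
  forall W, vopen W -> W vzero ->
    exists s, 0 < s /\ forall t, s < t -> forall y, Y y ->
      exists w, W w /\ y = vscal t w.

Definition tv_symmetric (Y : X -> Prop) := forall y, Y y -> Y (vopp y).

End Defs.
Arguments vadd {_}. Arguments vscal {_}. Arguments vopp {_}. Arguments vzero {_}. Arguments vopen {_}.
Arguments hausdorff X : clear implicits. Arguments locally_convex X : clear implicits.

Definition cont_on {X : TVS} (A : X -> Prop) (g : X -> R) :=
  forall x, A x -> forall eps, 0 < eps -> exists W, vopen W /\ W x /\
    forall x', A x' -> W x' -> Rabs (g x' - g x) < eps.

From Stdlib Require Import Reals Lra List Classical.
Open Scope R_scope.

(* Say that w is a step of size s from z if w = comb s1 z r and z = comb s2 w r'
   with s1, s2 <= s and r, r' in K.  A function convex on K and bounded by M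
   changes by at most 2Ms along such a step, and the maps x |-> comb t x b and
   x |-> comb t b x send steps to steps.  Hence the points of K joined to U by
   chains of steps of arbitrarily small total size form a convex set; by
   self-segment-density (and because, in a Hausdorff locally convex space,
   points of a segment close to one of its points have close parameters) it
   contains the segments between points of U, so it contains co U.
   Given k, segment-density of co U yields c = comb tau k x in co U with tau
   small and f(c,0) close to f(k,0).  Convexity bounds f(c,y) - f(k,y) from
   above by 2M tau at y and at -y, and since f(c,0) - f(k,0) is the mean of
   these two differences, the bound becomes two-sided. *)

Arguments vaddA {_}. Arguments vaddC {_}. Arguments vadd0 {_}. Arguments vaddN {_}.
Arguments vscalA {_}. Arguments vscal1 {_}. Arguments vscalDr {_}. Arguments vscalDl {_}.

Section VectorAlgebra.
Context {X : TVS}.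
Implicit Types x y : X.

Lemma vadd0l x : vadd vzero x = x.
Proof. rewrite vaddC; apply vadd0. Qed.

Lemma vadd_cancel (a x y : X) : vadd a x = vadd a y -> x = y.
Proof.
  intro H. rewrite <- (vadd0l x), <- (vadd0l y).
  rewrite <- (vaddN a), (vaddC a (vopp a)), <- !vaddA, H; reflexivity.
Qed.

Lemma vscal0 x : vscal 0 x = vzero.
Proof.
  apply (vadd_cancel (vscal 0 x)). rewrite vadd0, <- vscalDl.
  f_equal; ring.
Qed.

Lemma vscal_zero r : vscal r (@vzero X) = vzero.
Proof. rewrite <- (vscal0 (@vzero X)), vscalA; f_equal; ring. Qed.

Lemma vopp_scal x : vopp x = vscal (-1) x.
Proof.
  apply (vadd_cancel x). rewrite vaddN. rewrite <- (vscal1 x) at 1.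
  rewrite <- vscalDl. replace (1 + -1) with 0 by ring. now rewrite vscal0.
Qed.

Lemma vaddACA (a b c d : X) : vadd (vadd a b) (vadd c d) = vadd (vadd a c) (vadd b d).
Proof. rewrite <- !vaddA; f_equal. rewrite !vaddA; f_equal; apply vaddC. Qed.

Fixpoint lincomb (l : list X) (c : nat -> R) : X :=
  match l with
  | nil => vzero
  | x :: l' => vadd (vscal (c O) x) (lincomb l' (fun k => c (S k)))
  end.

Lemma lincomb_ext l : forall c1 c2, (forall k, c1 k = c2 k) -> lincomb l c1 = lincomb l c2.
Proof. induction l; intros c1 c2 E; simpl; auto. rewrite E; f_equal; apply IHl; auto. Qed.

Lemma lincombD l : forall c1 c2,
  lincomb l (fun k => c1 k + c2 k) = vadd (lincomb l c1) (lincomb l c2).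
Proof.
  induction l; intros; simpl. { now rewrite vadd0. }
  rewrite vaddACA, <- vscalDl; f_equal.
  apply (IHl (fun k => c1 (S k)) (fun k => c2 (S k))).
Qed.

Lemma lincombZ r l : forall c, lincomb l (fun k => r * c k) = vscal r (lincomb l c).
Proof.
  induction l; intros; simpl. { now rewrite vscal_zero. }
  rewrite vscalDr, vscalA; f_equal. apply (IHl (fun k => c (S k))).
Qed.

Lemma lincomb0 l : lincomb l (fun _ => 0) = vzero.
Proof. induction l; simpl; auto. now rewrite IHl, vscal0, vadd0. Qed.

Lemma lincomb_delta l : forall n,
  lincomb l (fun k => if Nat.eqb n k then 1 else 0) = nth n l vzero.
Proof.
  induction l; intros [|n]; simpl; auto.
  - now rewrite vscal1, lincomb0, vadd0.
  - rewrite vscal0, vadd0l. apply IHl.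
Qed.

Inductive vterm : Type :=
| VAtom : nat -> vterm
| VAdd : vterm -> vterm -> vterm
| VScal : R -> vterm -> vterm
| VOpp : vterm -> vterm
| VZero : vterm.

Fixpoint veval (l : list X) (e : vterm) : X :=
  match e with
  | VAtom n => nth n l vzero
  | VAdd a b => vadd (veval l a) (veval l b)
  | VScal r a => vscal r (veval l a)
  | VOpp a => vopp (veval l a)
  | VZero => vzero
  end.

Fixpoint vcoef (e : vterm) (k : nat) : R :=
  match e with
  | VAtom n => if Nat.eqb n k then 1 else 0
  | VAdd a b => vcoef a k + vcoef b k
  | VScal r a => r * vcoef a k
  | VOpp a => - vcoef a k
  | VZero => 0
  end.

Lemma veval_lincomb l e : veval l e = lincomb l (vcoef e).
Proof.
  induction e; simpl.
  - now rewrite lincomb_delta.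
  - now rewrite lincombD, IHe1, IHe2.
  - now rewrite lincombZ, IHe.
  - rewrite IHe, vopp_scal, <- lincombZ. apply lincomb_ext; intros; ring.
  - now rewrite lincomb0.
Qed.

Lemma veval_eq l e1 e2 : (forall k, vcoef e1 k = vcoef e2 k) -> veval l e1 = veval l e2.
Proof. intros; rewrite !veval_lincomb; now apply lincomb_ext. Qed.

End VectorAlgebra.

Ltac vindex x l :=
  lazymatch l with
  | cons x _ => constr:(O)
  | cons _ ?t => let n := vindex x t in constr:(S n)
  end.

Ltac vreify l e :=
  lazymatch e with
  | vadd ?a ?b => let ra := vreify l a in let rb := vreify l b in constr:(VAdd ra rb)
  | vscal ?r ?a => let ra := vreify l a in constr:(VScal r ra)
  | vopp ?a => let ra := vreify l a in constr:(VOpp ra)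
  | vzero => constr:(VZero)
  | comb ?t ?a ?b => let ra := vreify l a in let rb := vreify l b in
       constr:(VAdd (VScal (1 - t) ra) (VScal t rb))
  | _ => let n := vindex e l in constr:(VAtom n)
  end.

(* [vec_eq l] proves an equation between vector expressions in the atoms [l]
   (at most five) by comparing coefficients; coefficient identities that
   [ring] cannot close are left as goals. *)
Ltac vec_eq l :=
  lazymatch goal with
  | |- @eq _ ?lhs ?rhs =>
    let a := vreify l lhs in let b := vreify l rhs in
    change (veval l a = veval l b); apply veval_eq;
    let k := fresh "k" in intros [|[|[|[|[|k]]]]]; simpl; try ring
  end.

Section Segments.
Context {X : TVS}.
Implicit Types x y z : X.

Lemma comb_swap t x y : comb t x y = comb (1 - t) y x.
Proof. vec_eq (x :: y :: nil). Qed.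

Lemma comb_eq_left s x z : s <> 0 -> comb s x z = x -> z = x.
Proof.
  intros Hs H.
  assert (E : z = vadd (vscal (/s) (comb s x z)) (vscal (-(1-s)/s) x)).
  { vec_eq (x :: z :: nil). all: field; auto. }
  rewrite H in E. rewrite E. vec_eq (x :: nil). field; auto.
Qed.

Lemma segment_comb {x y z} : segment x y z -> exists t, 0 <= t <= 1 /\ z = comb t x y.
Proof.
  intros (t & Ht & ->). exists t. split; [exact Ht|]. vec_eq (x :: y :: nil).
Qed.

Lemma comb_segment {t x y} : 0 <= t <= 1 -> segment x y (comb t x y).
Proof. intro Ht. exists t. split; [exact Ht|]. vec_eq (x :: y :: nil). Qed.

End Segments.

Section SegmentParameter.
Context {X : TVS} (HX : hausdorff X) (HL : locally_convex X).
Implicit Types x y z : X.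

Lemma comb_param_lt_near x z d : x <> z -> 0 < d ->
  exists V, vopen V /\ V x /\ forall t, 0 <= t <= 1 -> V (comb t x z) -> t < d.
Proof.
  intros Hxz Hd. set (d' := Rmin d 1).
  assert (Hd' : 0 < d' <= 1 /\ d' <= d).
  { unfold d'; repeat split; [apply Rmin_glb_lt; lra | apply Rmin_r | apply Rmin_l]. }
  set (p := comb d' x z).
  assert (Hp : p <> x).
  { intro E. apply Hxz. symmetry. apply (comb_eq_left d'); [lra | exact E]. }
  destruct (HX x p (not_eq_sym Hp)) as (U1 & U2 & oU1 & oU2 & U1x & U2p & disj).
  destruct (HL x U1 oU1 U1x) as (V & oV & cV & Vx & VU1).
  exists V. split; [exact oV|]. split; [exact Vx|]. intros t Ht Vt.
  destruct (Rlt_or_le t d') as [|Hle]; [lra|exfalso].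
  (* [p] lies between [x] and [comb t x z], hence in the convex set [V]. *)
  assert (Vp : V p).
  { replace p with (comb (d' / t) x (comb t x z)).
    - assert (Hq : d' / t * t = d') by (field; lra).
      apply cV; auto. split; nra.
    - unfold p. vec_eq (x :: z :: nil); field; lra. }
  exact (disj p (conj (VU1 p Vp) U2p)).
Qed.

Lemma comb_param_near (a b : X) t d : a <> b -> 0 < t < 1 -> 0 < d ->
  exists V, vopen V /\ V (comb t a b) /\
    forall tau, 0 <= tau <= 1 -> V (comb tau a b) -> Rabs (tau - t) < d.
Proof.
  intros Hab Ht Hd. set (p := comb t a b).
  assert (Hpb : p <> b).
  { intro E. apply Hab. apply (comb_eq_left (1 - t)); [lra|].
    unfold p in E. now rewrite comb_swap in E. }
  assert (Hpa : p <> a).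
  { intro E. apply (not_eq_sym Hab). exact (comb_eq_left t a b ltac:(lra) E). }
  destruct (comb_param_lt_near p b d Hpb Hd) as (V1 & oV1 & V1p & HV1).
  destruct (comb_param_lt_near p a d Hpa Hd) as (V2 & oV2 & V2p & HV2).
  exists (fun v => V1 v /\ V2 v). split; [now apply vopen_inter|].
  split; [now split|]. intros tau Htau [V1tau V2tau].
  destruct (Rle_or_lt t tau) as [Hle|Hlt].
  - set (s := (tau - t) / (1 - t)).
    assert (Es : s * (1 - t) = tau - t) by (unfold s; field; lra).
    assert (Hs : 0 <= s <= 1) by (split; nra).
    assert (Ec : comb tau a b = comb s p b) by (unfold p; vec_eq (a :: b :: nil); nra).
    rewrite Ec in V1tau. specialize (HV1 s Hs V1tau).
    rewrite Rabs_right; nra.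
  - set (s := (t - tau) / t).
    assert (Es : s * t = t - tau) by (unfold s; field; lra).
    assert (Hs : 0 <= s <= 1) by (split; nra).
    assert (Ec : comb tau a b = comb s p a) by (unfold p; vec_eq (a :: b :: nil); nra).
    rewrite Ec in V2tau. specialize (HV2 s Hs V2tau).
    rewrite Rabs_left; nra.
Qed.

Lemma segment_dense_near (C K : X -> Prop) (k : X) W d :
  segment_dense C K -> K k -> vopen W -> W k -> 0 < d ->
  exists c y tau, C c /\ K y /\ 0 <= tau <= 1 /\ tau < d /\ c = comb tau k y /\ W c.
Proof.
  intros [HCK Hseg] Kk oW Wk Hd.
  destruct (Hseg k Kk) as (y & Cy & Hcl).
  assert (Hky : k <> y).
  { intros <-. destruct (Hcl _ (vopen_full X) I) as (a & _ & [Ha _] & Hak).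
    destruct (segment_comb Ha) as (t & _ & ->). apply Hak. vec_eq (k :: nil). }
  destruct (comb_param_lt_near k y d Hky Hd) as (V & oV & Vk & HV).
  destruct (Hcl _ (vopen_inter _ _ _ oW oV) (conj Wk Vk)) as (c & [Wc Vc] & [Hc Cc] & _).
  destruct (segment_comb Hc) as (tau & Htau & Ec).
  assert (Htd : tau < d) by (apply HV; [exact Htau | now rewrite <- Ec]).
  exists c, y, tau. auto 7.
Qed.

End SegmentParameter.

Section Chains.
Context {X : TVS} (K : X -> Prop).
Hypothesis HK : tv_convex K.
Implicit Types a b x y z w : X.

Definition step z w (s : R) :=
  exists s1 s2 r r', 0 <= s1 <= s /\ s1 <= 1 /\ 0 <= s2 <= s /\ s2 <= 1 /\
    K r /\ K r' /\ w = comb s1 z r /\ z = comb s2 w r'.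

Inductive chain : X -> X -> R -> Prop :=
| chain0 x : chain x x 0
| chainS x z w s1 s2 : chain x z s1 -> step z w s2 -> chain x w (s1 + s2).

Lemma chain_nonneg x w s : chain x w s -> 0 <= s.
Proof. induction 1 as [|x z w s1 s2 _ IH (a & _ & _ & _ & Ha & _)]; lra. Qed.

Lemma chain_trans x z w s1 s2 : chain x z s1 -> chain z w s2 -> chain x w (s1 + s2).
Proof.
  intros H1 H2. induction H2 as [|z' y w s s' _ IH Hs].
  - now rewrite Rplus_0_r.
  - rewrite <- Rplus_assoc. exact (chainS _ _ _ _ _ (IH H1) Hs).
Qed.

Lemma step_in z w s : K z -> step z w s -> K w.
Proof. intros Kz (s1 & _ & r & _ & H1 & H2 & _ & _ & Kr & _ & -> & _). apply HK; auto; lra. Qed.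

Lemma chain_in x w s : K x -> chain x w s -> K w.
Proof. intros Kx. induction 1; eauto using step_in. Qed.

Lemma step_comb_r b t z w s :
  K b -> 0 <= t <= 1 -> step z w s -> step (comb t z b) (comb t w b) s.
Proof.
  intros Kb Ht (s1 & s2 & r & r' & H1 & H2 & H3 & H4 & Kr & Kr' & E1 & E2).
  exists s1, s2, (comb t r b), (comb t r' b).
  do 4 (split; [assumption|]). split; [apply HK; auto|]. split; [apply HK; auto|].
  split.
  - rewrite E1. vec_eq (z :: r :: b :: nil).
  - rewrite E2 at 1. vec_eq (w :: r' :: b :: nil).
Qed.

Lemma chain_comb_r b t x w s :
  K b -> 0 <= t <= 1 -> chain x w s -> chain (comb t x b) (comb t w b) s.
Proof.
  intros Kb Ht. induction 1; [constructor|].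
  eapply chainS; eauto using step_comb_r.
Qed.

Lemma chain_comb_l b t x w s :
  K b -> 0 <= t <= 1 -> chain x w s -> chain (comb t b x) (comb t b w) s.
Proof. intros Kb Ht H. rewrite !(comb_swap t b). apply chain_comb_r; auto; lra. Qed.

Lemma step_comb_le a b t tau : K a -> K b -> 0 < t <= tau -> tau <= 1 -> t < 1 ->
  step (comb t a b) (comb tau a b) ((tau - t) / (t * (1 - t))).
Proof.
  intros Ka Kb Ht Htau Ht1. set (s := (tau - t) / (t * (1 - t))).
  assert (Es : s * (t * (1 - t)) = tau - t) by (unfold s; field; lra).
  assert (Hs : 0 <= s) by (unfold s; apply Rmult_le_pos; [lra | left; apply Rinv_0_lt_compat; nra]).
  set (s1 := s * t). set (s2 := s * (t * (1 - t)) / tau).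
  assert (E2 : s2 * tau = tau - t) by (unfold s2; rewrite Es; field; lra).
  exists s1, s2, b, a. unfold s1 in *. repeat split; auto; try nra.
  - vec_eq (a :: b :: nil); nra.
  - vec_eq (a :: b :: nil); nra.
Qed.

Lemma step_comb a b t tau : K a -> K b -> 0 < t < 1 -> 0 <= tau <= 1 ->
  step (comb t a b) (comb tau a b) (Rabs (tau - t) / (t * (1 - t))).
Proof.
  intros Ka Kb Ht Htau. destruct (Rle_or_lt t tau).
  - rewrite Rabs_right by lra. apply step_comb_le; auto; lra.
  - rewrite Rabs_left by lra. rewrite !(comb_swap _ a b).
    replace (- (tau - t) / (t * (1 - t))) with ((1 - tau - (1 - t)) / ((1 - t) * (1 - (1 - t))))
      by (field; lra).
    apply step_comb_le; auto; lra.
Qed.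

End Chains.

Definition chain_closure {X : TVS} (K U : X -> Prop) (x : X) :=
  K x /\ forall e, 0 < e -> exists u s, U u /\ chain K x u s /\ s < e.

Section ChainClosure.
Context {X : TVS} (HX : hausdorff X) (HL : locally_convex X) (K U : X -> Prop).
Hypothesis HK : tv_convex K.
Hypothesis HU : self_segment_dense U K.

Lemma chain_closure_comb (a b : X) t : U a -> U b -> 0 <= t <= 1 ->
  chain_closure K U (comb t a b).
Proof.
  destruct HU as (HUK & _ & Hdense).
  intros Ua Ub Ht. split; [apply HK; auto|]. intros e He.
  assert (Hend : forall v, U v -> comb t a b = v ->
                  exists u s, U u /\ chain K (comb t a b) u s /\ s < e).
  { intros v Uv <-. exists (comb t a b), 0. repeat split; auto; constructor. }
  destruct (Req_dec t 0) as [->|Ht0].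
  { apply (Hend a Ua). vec_eq (a :: b :: nil). }
  destruct (Req_dec t 1) as [->|Ht1].
  { apply (Hend b Ub). vec_eq (a :: b :: nil). }
  destruct (classic (a = b)) as [<-|Hab].
  { apply (Hend a Ua). vec_eq (a :: nil). }
  assert (Ht' : 0 < t < 1) by (split; apply Rnot_le_lt; intro; [apply Ht0 | apply Ht1]; lra).
  assert (Hpos : 0 < t * (1 - t)) by nra.
  destruct (comb_param_near HX HL a b t (e * (t * (1 - t))) Hab Ht'
              (Rmult_lt_0_compat _ _ He Hpos))
    as (V & oV & Vp & HV).
  destruct (Hdense a b Ua Ub _ (comb_segment Ht) V oV Vp) as (w & Vw & Hw & Uw).
  destruct (segment_comb Hw) as (tau & Htau & ->).
  exists (comb tau a b), (0 + Rabs (tau - t) / (t * (1 - t))).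
  split; [exact Uw|]. split.
  - eapply chainS; [constructor | apply step_comb; auto; lra].
  - specialize (HV tau Htau Vw).
    rewrite Rplus_0_l. apply Rmult_lt_reg_r with (t * (1 - t)); [exact Hpos|].
    unfold Rdiv. rewrite Rmult_assoc, Rinv_l by lra. lra.
Qed.

Lemma chain_closure_convex : tv_convex (chain_closure K U).
Proof.
  intros a b t [Ka Ga] [Kb Gb] Ht. split; [apply HK; auto|]. intros e He.
  destruct (Ga (e / 3) ltac:(lra)) as (ua & sa & Ua & Ca & Hsa).
  destruct (Gb (e / 3) ltac:(lra)) as (ub & sb & Ub & Cb & Hsb).
  destruct (proj2 (chain_closure_comb ua ub t Ua Ub Ht) (e / 3) ltac:(lra))
    as (u & s & Uu & Cu & Hs).
  exists u, (sb + sa + s). split; [exact Uu|]. split; [|lra].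
  destruct HU as (HUK & _).
  apply chain_trans with (comb t ua ub); [|exact Cu].
  apply chain_trans with (comb t a ub); [apply chain_comb_l | apply chain_comb_r]; auto.
Qed.

Lemma co_sub_chain_closure : subset (co U) (chain_closure K U).
Proof.
  intros x Hx. apply Hx; [exact chain_closure_convex|].
  intros u Uu. destruct HU as (HUK & _).
  split; [auto|]. intros e He. exists u, 0. repeat split; auto. constructor.
Qed.

End ChainClosure.

Definition convex_on {X : TVS} (K : X -> Prop) (g : X -> R) :=
  forall x1 x2 t, K x1 -> K x2 -> 0 <= t <= 1 ->
    g (comb t x1 x2) <= (1 - t) * g x1 + t * g x2.

Definition affine_on {Z : TVS} (Y : Z -> Prop) (h : Z -> R) :=
  forall y1 y2 t, Y y1 -> Y y2 -> 0 <= t <= 1 ->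
    h (comb t y1 y2) = (1 - t) * h y1 + t * h y2.

Section ConvexBounded.
Context {X : TVS} (K : X -> Prop) (g : X -> R) (M : R).
Hypothesis HK : tv_convex K.
Hypothesis Hg : convex_on K g.
Hypothesis HM : forall x, K x -> Rabs (g x) <= M.

Lemma convex_comb_sub_le x r t : K x -> K r -> 0 <= t <= 1 ->
  g (comb t x r) - g x <= 2 * M * t.
Proof.
  intros Kx Kr Ht. pose proof (Hg x r t Kx Kr Ht).
  pose proof (HM x Kx). pose proof (HM r Kr).
  assert (g r - g x <= 2 * M) by (split_Rabs; lra).
  nra.
Qed.

Lemma step_dist_le z w s : K z -> step K z w s -> Rabs (g w - g z) <= 2 * M * s.
Proof.
  intros Kz Hs. assert (Kw : K w) by exact (step_in K HK z w s Kz Hs).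
  destruct Hs as (s1 & s2 & r & r' & H1 & H2 & H3 & H4 & Kr & Kr' & E1 & E2).
  pose proof (convex_comb_sub_le z r s1 Kz Kr ltac:(lra)) as B1. rewrite <- E1 in B1.
  pose proof (convex_comb_sub_le w r' s2 Kw Kr' ltac:(lra)) as B2. rewrite <- E2 in B2.
  assert (HM0 : 0 <= M) by (pose proof (HM z Kz); pose proof (Rabs_pos (g z)); lra).
  apply Rabs_le. split; nra.
Qed.

Lemma chain_dist_le x w s : K x -> chain K x w s -> Rabs (g w - g x) <= 2 * M * s.
Proof.
  intros Kx H. induction H as [x|x z w s1 s2 Hc IH Hs].
  - rewrite Rminus_diag, Rabs_R0, Rmult_0_r. apply Rle_refl.
  - pose proof (step_dist_le z w s2 (chain_in K HK x z s1 Kx Hc) Hs).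
    specialize (IH Kx). split_Rabs; lra.
Qed.

End ConvexBounded.

Lemma zero_in_symmetric_convex {Z : TVS} (Y : Z -> Prop) (y : Z) :
  tv_convex Y -> tv_symmetric Y -> Y y -> Y vzero.
Proof.
  intros Hcv Hs Hy. replace (@vzero Z) with (comb (/2) y (vopp y)).
  - apply Hcv; auto; lra.
  - vec_eq (y :: nil); field.
Qed.

Lemma affine_at_zero {Z : TVS} (Y : Z -> Prop) (h : Z -> R) (y : Z) :
  affine_on Y h -> Y y -> Y (vopp y) -> h vzero = (h y + h (vopp y)) / 2.
Proof.
  intros Hh Hy Hy'. pose proof (Hh y (vopp y) (/2) Hy Hy' ltac:(lra)) as E.
  replace (comb (/2) y (vopp y)) with (@vzero Z) in E by (vec_eq (y :: nil); field).
  rewrite E; field.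
Qed.

Lemma sup_dist_comb_le {X Z : TVS} (K : X -> Prop) (Y : Z -> Prop) (f : X -> Z -> R) M
  k x tau y :
  tv_convex K -> tv_symmetric Y ->
  (forall y, Y y -> convex_on K (fun x => f x y)) ->
  (forall x, K x -> affine_on Y (fun y => f x y)) ->
  (forall x y, K x -> Y y -> Rabs (f x y) <= M) ->
  K k -> K x -> 0 <= tau <= 1 -> Y y ->
  Rabs (f (comb tau k x) y - f k y)
    <= 2 * Rabs (f (comb tau k x) vzero - f k vzero) + 2 * M * tau.
Proof.
  intros HK Hs Hcv Haff HM Kk Kx Htau Hy.
  assert (Hy' : Y (vopp y)) by (apply Hs; exact Hy).
  assert (Kc : K (comb tau k x)) by (apply HK; auto; lra).
  pose proof (convex_comb_sub_le K _ M (Hcv y Hy) (fun x Kx => HM x y Kx Hy) k x tau Kk Kx Htau).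
  pose proof (convex_comb_sub_le K _ M (Hcv _ Hy') (fun x Kx => HM x _ Kx Hy') k x tau Kk Kx Htau).
  pose proof (affine_at_zero Y _ y (Haff _ Kc) Hy Hy').
  pose proof (affine_at_zero Y _ y (Haff _ Kk) Hy Hy').
  simpl in *. split_Rabs; lra.
Qed.
Theorem mainTheorem18 (X Z : TVS) (K : X -> Prop) (Y : Z -> Prop) (U : X -> Prop)
  (f : X -> Z -> R)
  (HX : hausdorff X) (HXlc : locally_convex X)
  (HKne : exists k, K k) (HKc : tv_compact K) (HKcv : tv_convex K)
  (HZlc : locally_convex Z)
  (HYcl : tv_closed Y) (HYcv : tv_convex Y) (HYb : tv_bounded Y) (HYs : tv_symmetric Y)
  (HU : self_segment_dense U K) (HcoU : segment_dense (co U) K)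
  (Hfb : exists M, forall x y, K x -> Y y -> Rabs (f x y) <= M)
  (Hfx : forall y, Y y ->
     (forall x1 x2 t, K x1 -> K x2 -> 0 <= t <= 1 ->
        f (comb t x1 x2) y <= (1 - t) * f x1 y + t * f x2 y)
     /\ cont_on K (fun x => f x y))
  (Hfy : forall x, K x ->
     (forall y1 y2 t, Y y1 -> Y y2 -> 0 <= t <= 1 ->
        f x (comb t y1 y2) = (1 - t) * f x y1 + t * f x y2)
     /\ cont_on Y (fun y => f x y)) :
  forall k, K k -> forall eps, 0 < eps ->
    exists u, U u /\ exists d, d < eps /\
      forall y, Y y -> Rabs (f u y - f k y) <= d.
Proof.
  intros k Kk eps Heps.
  destruct Hfb as [M0 HM0]. set (M := Rabs M0).
  assert (HM : forall x y, K x -> Y y -> Rabs (f x y) <= M).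
  { intros x y Kx Hy. apply Rle_trans with M0; [auto | apply Rle_abs]. }
  assert (Hcv : forall y, Y y -> convex_on K (fun x => f x y)) by (intros y Hy; exact (proj1 (Hfx y Hy))).
  assert (Haff : forall x, K x -> affine_on Y (fun y => f x y)) by (intros x Kx; exact (proj1 (Hfy x Kx))).
  destruct (classic (Y vzero)) as [Y0 | nY0].
  2: { destruct HU as (_ & HKU & _).
       destruct (HKU k Kk _ (vopen_full X) I) as (u & _ & Uu).
       exists u. split; [exact Uu|]. exists 0. split; [exact Heps|].
       intros y Hy. exfalso. exact (nY0 (zero_in_symmetric_convex Y y HYcv HYs Hy)). }
  set (delta := eps / (8 * (M + 1))).
  assert (HM1 : 0 < M + 1) by (pose proof (Rabs_pos M0); unfold M; lra).
  assert (Hdelta : 0 < delta) by (apply Rdiv_lt_0_compat; lra).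
  assert (Hsmall : forall s, 0 <= s < delta -> 2 * M * s <= eps / 4).
  { intros s Hs. assert (E : (M + 1) * delta = eps / 8) by (unfold delta; field; lra). nra. }
  destruct (proj2 (Hfx vzero Y0) k Kk (eps / 8) ltac:(lra)) as (W & oW & Wk & HW).
  destruct (segment_dense_near HX HXlc (co U) K k W delta HcoU Kk oW Wk Hdelta)
    as (c & x & tau & coc & Kx & Htau & Htd & -> & Wc).
  destruct (co_sub_chain_closure HX HXlc K U HKcv HU _ coc) as [Kc Hc].
  destruct (Hc delta Hdelta) as (u & s & Uu & Cu & Hs).
  exists u. split; [exact Uu|]. exists (3 * eps / 4). split; [lra|]. intros y Hy.
  pose proof (chain_dist_le K _ M HKcv (Hcv y Hy) (fun x Kx => HM x y Kx Hy) _ _ _ Kc Cu).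
  pose proof (sup_dist_comb_le K Y f M k x tau y HKcv HYs Hcv Haff HM Kk Kx Htau Hy).
  pose proof (HW _ Kc Wc).
  pose proof (Hsmall s (conj (chain_nonneg K _ _ _ Cu) Hs)).
  pose proof (Hsmall tau (conj (proj1 Htau) Htd)).
  simpl in *. split_Rabs; lra.
Qed.
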